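(* Let $N\ge1$ be an integer, $d>0$, $0\le s_1\le\dots\le s_N$, and let $T\ge (N+1)d$. Let (P) be the problem $$\min_{x\in\mathbb{R}^{N+1}}\ \sum_{i=1}^{N+1}x_i^2$$ subject to - $\sum_{i=1}^k x_i\ge s_k+kd$ for $1\le k\le N$, - $x_i\ge 2d$ for $2\le i\le N$, - $x_{N+1}\ge d$, - $\sum_{i=1}^{N+1}x_i=T+Nd$. Assume (P) is feasible, and let $x^*$ be its optimal solution. Let $(P^e)$ be the same problem without the constraints $x_i\ge 2d$ ($2\le i\le N$) and $x_{N+1}\ge d$, and let $x^e$ be the optimal solution of $(P^e)$. If $x_i^e\ge 2d$ for all $2\le i\le N$ and $x_{N+1}^e\ge d$, then $x^*=x^e$. Otherwise, let $n_0$ be the smallest index $i\in\{2,\dots,N+1\}$ at which $x^e$ violates its constraint in (P), meaning $x_i^e<2d$ if $i\le N$, or $x_{N+1}^e<d$ if $i=N+1$. Then $n_0\le N$, and the following hold. - If $n_0>2$, then $x_i^*=x_i^e$ for $1\le i\le n_0-1$, $x_i^*=2d$ for $n_0\le i\le N$, and $x_{N+1}^*=T+Nd-\sum_{i=1}^N x_i^*$. - If $n_0=2$ and $x_1^e=s_1+d$, then $x^*$ is given by the same formulas with $n_0=2$. - If $n_0=2$ and $x_1^e\ne s_1+d$, then $x_1^*=\max\left\{\frac{T-(N-2)d}{2},\ \max_{1\le k\le N}\{s_k-(k-2)d\}\right\}$, $x_i^*=2d$ for $2\le i\le N$, and $x_{N+1}^*=T-(N-2)d-x_1^*$.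
   Context: This optimization problem arises from minimizing the area under the age-of-information curve of a single energy harvesting transmitter with energy arrival times $s_k$, fixed service time $d$, and session length $T$. Both (P) and $(P^e)$ have strictly convex objectives, so their optimal solutions are unique whenever they exist. *)

(* R : realFieldType, vectors x in R^{N+1} represented as
   x : nat -> R with 1-based indices 1..N+1 (other values irrelevant). *)
From HB Require Import structures.
From mathcomp Require Import all_boot all_order all_algebra.
Set Implicit Arguments. Unset Strict Implicit. Unset Printing Implicit Defensive.
Import Order.TTheory GRing.Theory Num.Theory.
Local Open Scope ring_scope.

Section AoI.
Variable R : realFieldType.

Definition aoi_obj (N : nat) (x : nat -> R) : R :=
  \sum_(1 <= i < N.+2) x i ^+ 2.

Definition feasPe (N : nat) (d : R) (s : nat -> R) (T : R) (x : nat -> R) : Prop :=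
  (forall k : nat, (1 <= k <= N)%N -> s k + k%:R * d <= \sum_(1 <= i < k.+1) x i) /\
  \sum_(1 <= i < N.+2) x i = T + N%:R * d.

Definition feasP (N : nat) (d : R) (s : nat -> R) (T : R) (x : nat -> R) : Prop :=
  feasPe N d s T x /\
  (forall i : nat, (2 <= i <= N)%N -> 2%:R * d <= x i) /\
  d <= x N.+1.

Definition is_optimal (N : nat) (feas : (nat -> R) -> Prop) (x : nat -> R) : Prop :=
  feas x /\ forall y, feas y -> aoi_obj N x <= aoi_obj N y.

Definition violates (N : nat) (d : R) (x : nat -> R) (i : nat) : Prop :=
  if (i <= N)%N then x i < 2%:R * d else x i < d.

End AoI.

(* (P) minimises a strictly convex quadratic, so a feasible [y] is its unique
   optimum as soon as [sum_i y_i (z_i - y_i) >= 0] for every feasible [z].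
   Summation by parts turns this into a KKT certificate: once the multipliers
   of the lower bounds are removed, [y] must be nonincreasing and may drop only
   where a prefix constraint is tight.  Moving mass between neighbouring
   coordinates of the relaxed optimum [x^e] shows that [x^e] itself has this
   shape, which settles the case where [x^e] is feasible for (P).  Otherwise
   [x^e] stays below [2d] from its first violation [n0] on, and each candidate
   of the theorem ([x^e] up to [n0 - 1] followed by [2d], or a constant first
   coordinate followed by [2d]) inherits a certificate; in the last case the
   tight prefix constraint is the one attaining the maximum in the formula for
   [x_1]. *)

From HB Require Import structures.
From mathcomp Require Import all_boot all_order all_algebra.
From mathcomp Require Import ring lra zify.
Set Implicit Arguments. Unset Strict Implicit. Unset Printing Implicit Defensive.
Import Order.TTheory GRing.Theory Num.Theory.
Local Open Scope ring_scope.

Section PrefixSums.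
Variable R : comNzRingType.
Implicit Types (x y b w : nat -> R).

Definition psum (k : nat) x : R := \sum_(1 <= i < k.+1) x i.

Lemma psum0 x : psum 0 x = 0.
Proof. by rewrite /psum big_geq. Qed.

Lemma psumS x k : psum k.+1 x = psum k x + x k.+1.
Proof. by rewrite /psum big_nat_recr. Qed.

Lemma psum1 x : psum 1 x = x 1%N.
Proof. by rewrite psumS psum0 add0r. Qed.

Lemma eq_psum x y k : (forall i, (1 <= i <= k)%N -> x i = y i) ->
  psum k x = psum k y.
Proof. by move=> eq_xy; apply: eq_big_nat => i /andP[? ?]; apply: eq_xy; lia. Qed.

Lemma psumD x y k : psum k (fun i => x i + y i) = psum k x + psum k y.
Proof. exact: big_split. Qed.

Lemma psumB x y k : psum k (fun i => x i - y i) = psum k x - psum k y.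
Proof. exact: sumrB. Qed.

Lemma psum_const (c : R) k : psum k (fun=> c) = k%:R * c.
Proof. by rewrite /psum sumr_const_nat subn1 mulr_natl. Qed.

Lemma psum_cat x m n : (m <= n)%N ->
  psum n x = psum m x + \sum_(m.+1 <= i < n.+1) x i.
Proof. by move=> le_mn; rewrite /psum (big_cat_nat _ (n := m.+1)). Qed.

Lemma sum_nat_const_eq x (c : R) m n : (forall i, (m <= i < n)%N -> x i = c) ->
  \sum_(m <= i < n) x i = (n - m)%:R * c.
Proof. by move=> xc; rewrite (eq_big_nat _ _ xc) sumr_const_nat mulr_natl. Qed.

Lemma sum_nat_indicator (f : nat -> R) m n k : (m <= k < n)%N ->
  \sum_(m <= i < n) f i * (i == k)%:R = f k.
Proof.
move=> k_in; rewrite (eq_bigr (fun i => if i == k then f i else 0)).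
  by rewrite -big_mkcond big_nat1_eq k_in.
by move=> i _; case: eqP; rewrite ?mulr1 ?mulr0.
Qed.

Lemma sum_by_parts n b w : \sum_(1 <= i < n.+2) b i * w i =
  \sum_(1 <= k < n.+1) (b k - b k.+1) * psum k w + b n.+1 * psum n.+1 w.
Proof.
elim: n => [|n IH]; first by rewrite big_nat1 big_geq // add0r psum1.
by rewrite big_nat_recr //= IH [in RHS]big_nat_recr //= (psumS w n.+1); ring.
Qed.

End PrefixSums.

Section OrderedPrefixSums.
Variable R : numDomainType.
Implicit Types (x y : nat -> R).

Lemma ler_psum x y k : (forall i, (1 <= i <= k)%N -> x i <= y i) ->
  psum k x <= psum k y.
Proof. by move=> le_xy; apply: ler_sum_nat => i /andP[? ?]; apply: le_xy; lia. Qed.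

Lemma sum_nat_le_const x (c : R) m n : (forall i, (m <= i < n)%N -> x i <= c) ->
  \sum_(m <= i < n) x i <= (n - m)%:R * c.
Proof. by move=> xc; rewrite mulr_natl -sumr_const_nat; apply: ler_sum_nat. Qed.

Lemma sum_nat_ge_const x (c : R) m n : (forall i, (m <= i < n)%N -> c <= x i) ->
  (n - m)%:R * c <= \sum_(m <= i < n) x i.
Proof. by move=> xc; rewrite mulr_natl -sumr_const_nat; apply: ler_sum_nat. Qed.

End OrderedPrefixSums.

Lemma bigmax_nat_attained disp (T : orderType disp) (F : nat -> T) x0 m n :
  x0 = F m -> (m < n)%N ->
  exists2 k, (m <= k < n)%N & \big[Order.max/x0]_(m <= i < n) F i = F k.
Proof.
move=> x0E lt_mn; rewrite big_nat_cond.
apply: (big_ind (fun v => exists2 k, (m <= k < n)%N & v = F k)).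
- by exists m; rewrite ?leqnn.
- by move=> a b [ka ka_range ->] [kb kb_range ->]; rewrite /Order.max; case: ifP;
    [exists kb | exists ka].
- by move=> k /andP[k_range _]; exists k.
Qed.

Section Quadratic.
Variables (R : realFieldType) (N : nat).
Implicit Types (x y z : nat -> R).

Lemma aoi_obj_expand x z : aoi_obj N z =
  aoi_obj N x + 2 * \sum_(1 <= i < N.+2) x i * (z i - x i)
  + \sum_(1 <= i < N.+2) (z i - x i) ^+ 2.
Proof. by rewrite /aoi_obj mulr_sumr -!big_split /=; apply: eq_bigr => i _; ring. Qed.

Lemma optimal_eq_variational (F : (nat -> R) -> Prop) y x : F y ->
  (forall z, F z -> 0 <= \sum_(1 <= i < N.+2) y i * (z i - y i)) ->
  is_optimal N F x -> forall i, (1 <= i <= N.+1)%N -> x i = y i.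
Proof.
move=> Fy y_var [Fx x_min] i i_range.
have sq_ge0 j : 0 <= (x j - y j) ^+ 2 by apply: sqr_ge0.
have sq_sum0 : \sum_(1 <= j < N.+2) (x j - y j) ^+ 2 = 0.
  have := x_min y Fy; have := y_var x Fx; rewrite (aoi_obj_expand y x).
  have := @sumr_ge0 _ _ (index_iota 1 N.+2) xpredT _ (fun j _ => sq_ge0 j); lra.
move/eqP: sq_sum0; rewrite psumr_eq0 // => /allP/(_ i).
rewrite mem_index_iota ltnS i_range sqrf_eq0 subr_eq0 => /(_ isT)/eqP.
exact.
Qed.

Definition bump k (del : R) i : R := del * ((i == k)%:R - (i == k.+1)%:R).

Lemma sum_bump (f : nat -> R) k del : (1 <= k <= N)%N ->
  \sum_(1 <= i < N.+2) f i * bump k del i = del * (f k - f k.+1).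
Proof.
move=> k_range; rewrite /bump.
under eq_bigr do rewrite mulrCA mulrBr.
rewrite -mulr_sumr sumrB !sum_nat_indicator //; lia.
Qed.

Lemma psum_bump k del j : (1 <= k)%N -> psum j (bump k del) = del * (j == k)%:R.
Proof.
move=> k_gt0; elim: j => [|j IH]; first by rewrite psum0 eq_sym gtn_eqF // mulr0.
by rewrite psumS IH /bump eqSS mulrBr addrC subrK.
Qed.

Lemma aoi_obj_bump x k del : (1 <= k <= N)%N ->
  aoi_obj N (fun i => x i + bump k del i) =
  aoi_obj N x + 2 * del * (x k - x k.+1) + 2 * del ^+ 2.
Proof.
move=> k_range; rewrite (aoi_obj_expand x).
have shiftK i : x i + bump k del i - x i = bump k del i by rewrite addrC addKr.
under eq_bigr do rewrite shiftK.
under [X in _ + X]eq_bigr do rewrite shiftK expr2.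
rewrite !sum_bump // /bump (ltn_eqF (ltnSn k)) (gtn_eqF (ltnSn k)) !eqxx /=; ring.
Qed.

End Quadratic.

Section Problem.
Variables (R : realFieldType) (N : nat) (d T : R) (s : nat -> R).
Implicit Types (x y z g p q : nat -> R).

Definition lower_bound (i : nat) : R := if (i <= N)%N then 2%:R * d else d.

Definition tight y k := psum k y = s k + k%:R * d.

Lemma lower_bound_mid i : (i <= N)%N -> lower_bound i = 2%:R * d.
Proof. by rewrite /lower_bound => ->. Qed.

Lemma lower_bound_last : lower_bound N.+1 = d.
Proof. by rewrite /lower_bound ltnn. Qed.

Lemma violatesE x i : violates N d x i <-> x i < lower_bound i.
Proof. by rewrite /violates /lower_bound; case: ifP. Qed.

Lemma not_violatesE x i : ~ violates N d x i <-> lower_bound i <= x i.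
Proof. rewrite violatesE leNgt; exact: rwP negP. Qed.

Lemma feasP_lower_bound x : feasP N d s T x ->
  forall i, (2 <= i <= N.+1)%N -> lower_bound i <= x i.
Proof.
move=> [_ [x_mid x_last]] i i_range.
have [i_le | i_gt] := leqP i N; first by rewrite lower_bound_mid //; apply: x_mid; lia.
have -> : i = N.+1 by lia.
by rewrite lower_bound_last.
Qed.

Lemma feasPI x : (0 < N)%N -> feasPe N d s T x ->
  (forall i, (2 <= i <= N.+1)%N -> lower_bound i <= x i) -> feasP N d s T x.
Proof.
move=> N_gt0 x_rel x_lb; split=> //; split=> [i i_range|].
  by rewrite -(lower_bound_mid (i := i)); [apply: x_lb |]; lia.
by rewrite -lower_bound_last; apply: x_lb; lia.
Qed.

Lemma feasPe_last x : feasPe N d s T x -> x N.+1 = T + N%:R * d - psum N x.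
Proof. by move=> [_ x_tot]; rewrite -x_tot -/(psum N.+1 x) psumS addrC addKr. Qed.

Lemma feasP_budget x k : feasP N d s T x -> (1 <= k <= N)%N ->
  s k + k%:R * d + (N - k)%:R * (2%:R * d) + d <= T + N%:R * d.
Proof.
move=> [[x_pre x_tot] [x_mid x_last]] k_range.
have pre : s k + k%:R * d <= psum k x := x_pre k k_range.
have mid : (N - k)%:R * (2%:R * d) <= \sum_(k.+1 <= i < N.+1) x i.
  by rewrite -subSS; apply: sum_nat_ge_const => i i_range; apply: x_mid; lia.
move: x_tot; rewrite -/(psum N.+1 x) psumS (psum_cat _ (m := k)); [lra | lia].
Qed.

(* [g] is [y] minus the multipliers of the lower bounds, and a drop
   [g k - g k.+1] is the multiplier of the [k]-th prefix constraint. *)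
Definition kkt_certificate y g : Prop :=
  [/\ g 1%N = y 1%N,
      forall i, (2 <= i <= N.+1)%N -> g i <= y i /\ (g i = y i \/ y i = lower_bound i)
    & forall k, (1 <= k <= N)%N -> g k.+1 <= g k /\ (g k.+1 = g k \/ tight y k)].

Lemma kkt_variational y g z : feasP N d s T y -> kkt_certificate y g ->
  feasP N d s T z -> 0 <= \sum_(1 <= i < N.+2) y i * (z i - y i).
Proof.
move=> Fy [g1 g_lb g_drop] Fz.
pose w i := z i - y i.
have w_tot : psum N.+1 w = 0.
  by rewrite psumB; move: Fy.1.2 Fz.1.2; rewrite /psum => -> ->; rewrite subrr.
have -> : \sum_(1 <= i < N.+2) y i * (z i - y i) =
    \sum_(1 <= i < N.+2) g i * w i + \sum_(1 <= i < N.+2) (y i - g i) * w i.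
  by rewrite -big_split; apply: eq_bigr => i _ /=; rewrite /w; ring.
apply: addr_ge0.
  rewrite sum_by_parts w_tot mulr0 addr0 big_nat_cond.
  apply: sumr_ge0 => k /andP[k_range _].
  have [g_le [-> | y_tight]] := g_drop k ltac:(lia); first by rewrite subrr mul0r.
  rewrite mulr_ge0 ?subr_ge0 // psumB subr_ge0 y_tight.
  exact: Fz.1.1 k ltac:(lia).
rewrite big_nat_cond; apply: sumr_ge0 => i /andP[i_range _].
have [-> | i_ge2] : i = 1%N \/ (2 <= i)%N by lia.
  by rewrite g1 subrr mul0r.
have [g_le [-> | y_lb]] := g_lb i ltac:(lia); first by rewrite subrr mul0r.
rewrite mulr_ge0 ?subr_ge0 // y_lb.
exact: feasP_lower_bound Fz i ltac:(lia).
Qed.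

Lemma kkt_optimal y g x : feasP N d s T y -> kkt_certificate y g ->
  is_optimal N (feasP N d s T) x -> forall i, (1 <= i <= N.+1)%N -> x i = y i.
Proof.
move=> Fy y_kkt; apply: (optimal_eq_variational Fy) => z.
exact: kkt_variational Fy y_kkt.
Qed.

Lemma step_kkt_certificate y q k c : (1 <= k <= N)%N ->
  q 1%N = y 1%N ->
  (forall i, (2 <= i <= k)%N -> q i <= y i /\ (q i = y i \/ y i = lower_bound i)) ->
  (forall j, (1 <= j < k)%N -> q j.+1 <= q j /\ (q j.+1 = q j \/ tight y j)) ->
  c <= q k -> (c = q k \/ tight y k) ->
  (forall i, (k < i <= N.+1)%N -> c <= y i /\ (c = y i \/ y i = lower_bound i)) ->
  kkt_certificate y (fun i => if (i <= k)%N then q i else c).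
Proof.
move=> k_range q1 q_lb q_drop c_le c_drop c_lb.
split=> [|i i_range|j j_range]; first by rewrite ifT //; lia.
  by case: ifPn => i_k; [apply: q_lb | apply: c_lb]; lia.
case: (ltngtP j k) => [lt_jk | gt_jk | ->] //=; first by apply: q_drop; lia.
by split=> //; left.
Qed.

Definition pinned p m c i : R :=
  if (i <= m)%N then p i else if (i <= N)%N then 2%:R * d else c.

Definition pinned_fill p m : R := T + N%:R * d - psum m p - (N - m)%:R * (2%:R * d).

Lemma pinned_low p m c i : (i <= m)%N -> pinned p m c i = p i.
Proof. by rewrite /pinned => ->. Qed.

Lemma pinned_mid p m c i : (m < i <= N)%N -> pinned p m c i = 2%:R * d.
Proof. by move=> /andP[lt_mi le_iN]; rewrite /pinned leqNgt lt_mi le_iN. Qed.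

Lemma pinned_last p m c : (m <= N)%N -> pinned p m c N.+1 = c.
Proof. by move=> le_mN; rewrite /pinned leqNgt ltnS le_mN ltnn. Qed.

Lemma psum_pinned_low p m c k : (k <= m)%N -> psum k (pinned p m c) = psum k p.
Proof. by move=> le_km; apply: eq_psum => i i_range; rewrite pinned_low //; lia. Qed.

Lemma psum_pinned_mid p m c k : (m <= k <= N)%N ->
  psum k (pinned p m c) = psum m p + (k - m)%:R * (2%:R * d).
Proof.
move=> k_range; rewrite (psum_cat _ (m := m)); last lia.
rewrite psum_pinned_low // (sum_nat_const_eq (c := 2%:R * d)) ?subSS // => i i_range.
by rewrite pinned_mid //; lia.
Qed.

Lemma pinned_values x p m c : (1 <= m <= N)%N ->
  (forall i, (1 <= i <= N.+1)%N -> x i = pinned p m c i) ->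
  [/\ forall i, (1 <= i <= m)%N -> x i = p i,
      forall i, (m < i <= N)%N -> x i = 2%:R * d & x N.+1 = c].
Proof.
move=> m_range xE; split=> [i i_range | i i_range |].
- by rewrite xE ?pinned_low //; lia.
- by rewrite xE ?pinned_mid //; lia.
- by rewrite xE ?pinned_last //; lia.
Qed.

Lemma tight_pinned p m c k : (k <= m)%N -> tight (pinned p m c) k <-> tight p k.
Proof. by move=> le_km; rewrite /tight psum_pinned_low. Qed.

Lemma pinned_feasP p m c : (1 <= m <= N)%N ->
  (forall k, (1 <= k <= m)%N -> s k + k%:R * d <= psum k p) ->
  (forall k, (m < k <= N)%N -> s k + k%:R * d <= psum m p + (k - m)%:R * (2%:R * d)) ->
  (forall i, (2 <= i <= m)%N -> lower_bound i <= p i) ->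
  d <= c -> psum m p + (N - m)%:R * (2%:R * d) + c = T + N%:R * d ->
  feasP N d s T (pinned p m c).
Proof.
move=> m_range p_low p_mid p_lb c_ge c_tot.
apply: feasPI; [lia | split=> [k k_range|] | move=> i i_range].
- rewrite -/(psum k _); have [le_km | lt_mk] := leqP k m.
    by rewrite psum_pinned_low //; apply: p_low; lia.
  by rewrite psum_pinned_mid; [apply: p_mid | ]; lia.
- by rewrite -/(psum N.+1 _) psumS psum_pinned_mid ?pinned_last //; lia.
- have [le_im | lt_mi] := leqP i m; first by rewrite pinned_low //; apply: p_lb; lia.
  have [le_iN | lt_Ni] := leqP i N; first by rewrite pinned_mid ?lower_bound_mid //; lia.
  have -> : i = N.+1 by lia.
  by rewrite pinned_last ?lower_bound_last //; lia.
Qed.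

(* The value of [x_1 + x_(N+1)] once [x_2 = ... = x_N = 2d]. *)
Definition boundary_budget : R := T - (N%:R - 2%:R) * d.

Definition boundary_max : R :=
  \big[Num.max/s 1%N + d]_(1 <= k < N.+1) (s k - (k%:R - 2%:R) * d).

Definition boundary_first : R := Num.max (boundary_budget / 2%:R) boundary_max.

Lemma boundary_max_ge k : (1 <= k <= N)%N ->
  s k - (k%:R - 2%:R) * d <= boundary_max.
Proof.
move=> k_range; rewrite /boundary_max.
apply: (le_bigmax_seq _ _ xpredT (fun k => s k - (k%:R - 2%:R) * d)) => //.
by rewrite mem_index_iota; lia.
Qed.

Lemma boundary_max_attained : (0 < N)%N ->
  exists2 k, (1 <= k <= N)%N & boundary_max = s k - (k%:R - 2%:R) * d.
Proof.
move=> N_gt0; rewrite /boundary_max.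
have [|k k_range ->] := bigmax_nat_attained
  (F := fun k => s k - (k%:R - 2%:R) * d) (x0 := s 1%N + d) (m := 1%N) (n := N.+1) _ N_gt0.
  by ring.
by exists k => //; lia.
Qed.

Lemma boundary_max_le_budget : (exists x, feasP N d s T x) -> (0 < N)%N ->
  boundary_max <= boundary_budget - d.
Proof.
move=> [x Fx] N_gt0; have [k k_range ->] := boundary_max_attained N_gt0.
have := feasP_budget Fx k_range; rewrite natrB; last lia.
by rewrite /boundary_budget; lra.
Qed.

Lemma two_level_optimal (y1 : R) k0 xs : (1 <= k0 <= N)%N ->
  (forall k, (1 <= k <= N)%N -> s k - (k%:R - 2%:R) * d <= y1) ->
  boundary_budget / 2%:R <= y1 -> y1 <= 2%:R * d -> y1 <= boundary_budget - d ->
  boundary_budget < 4%:R * d ->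
  y1 = boundary_budget / 2%:R \/ y1 = s k0 - (k0%:R - 2%:R) * d ->
  is_optimal N (feasP N d s T) xs ->
  forall i, (1 <= i <= N.+1)%N -> xs i = pinned (fun=> y1) 1 (boundary_budget - y1) i.
Proof.
move=> k0_range y1_ge half_le y1_le2 y1_le B_lt y1E xs_opt.
have Fy : feasP N d s T (pinned (fun=> y1) 1 (boundary_budget - y1)).
  apply: pinned_feasP; first lia.
  - move=> k k_range; have -> : k = 1%N by lia.
    by have := y1_ge 1%N ltac:(lia); rewrite psum_const; lra.
  - move=> k k_range; have := y1_ge k ltac:(lia).
    by rewrite psum_const natrB; [lra | lia].
  - by move=> i; lia.
  - by lra.
  - by rewrite psum_const natrB /boundary_budget; [ring | lia].
apply: (kkt_optimal Fy _ xs_opt).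
apply: (step_kkt_certificate (q := fun=> y1) (k := k0) (c := boundary_budget - y1)) => //.
- move=> i i_range; rewrite pinned_mid ?lower_bound_mid; try lia.
  by split=> //; right.
- by move=> j _; split=> //; left.
- by lra.
- case: y1E => y1E; [left; lra | right].
  rewrite /tight psum_pinned_mid; last lia.
  by rewrite psum_const y1E natrB; [ring | lia].
move=> i i_range; have [le_iN | lt_Ni] := leqP i N.
  by rewrite pinned_mid ?lower_bound_mid; [split; [lra | right] | lia | lia].
have -> : i = N.+1 by lia.
by rewrite pinned_last; [split=> //; left | lia].
Qed.

Section RelaxedOptimum.
Variable xe : nat -> R.
Hypothesis xe_opt : is_optimal N (feasPe N d s T) xe.

Lemma relaxed_bump k del : (1 <= k <= N)%N ->
  s k + k%:R * d <= psum k xe + del -> 0 <= del * (xe k - xe k.+1) + del ^+ 2.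
Proof.
move=> k_range k_ok; have [[xe_pre xe_tot] xe_min] := xe_opt.
have feas : feasPe N d s T (fun i => xe i + bump k del i).
  split=> [j j_range|].
    rewrite -/(psum j _) psumD psum_bump; last lia.
    have [-> | ne] := eqVneq j k; first by rewrite mulr1.
    by rewrite mulr0 addr0; apply: xe_pre.
  rewrite -/(psum N.+1 _) psumD psum_bump; last lia.
  by rewrite gtn_eqF ?mulr0 ?addr0 //; lia.
by have := xe_min _ feas; rewrite aoi_obj_bump //; lra.
Qed.

Lemma relaxed_step k : (1 <= k <= N)%N ->
  xe k.+1 <= xe k /\ (xe k.+1 = xe k \/ tight xe k).
Proof.
move=> k_range; have xe_pre : s k + k%:R * d <= psum k xe := xe_opt.1.1 k k_range.
have xe_le : xe k.+1 <= xe k.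
  rewrite leNgt; apply/negP => lt_k.
  have := relaxed_bump (del := (xe k.+1 - xe k) / 2%:R) k_range; nra.
split=> //; have [| ne] := eqVneq (xe k.+1) (xe k); [by left | right].
have gap_gt0 : 0 < xe k - xe k.+1 by rewrite subr_gt0 lt_neqAle ne xe_le.
apply/eqP; rewrite eq_le xe_pre andbT leNgt; apply/negP => slack_gt0.
(* Small enough to keep the [k]-th prefix constraint and to lower the objective. *)
pose del := Num.min ((xe k - xe k.+1) / 2%:R) (psum k xe - (s k + k%:R * d)).
have del_gt0 : 0 < del by rewrite /del lt_min subr_gt0 slack_gt0 andbT; lra.
have del_gap : del <= (xe k - xe k.+1) / 2%:R by rewrite /del ge_min lexx.
have del_slack : del <= psum k xe - (s k + k%:R * d) by rewrite /del ge_min lexx orbT.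
have := relaxed_bump (del := - del) k_range; nra.
Qed.

Lemma relaxed_noninc i j : (1 <= i <= j)%N -> (j <= N.+1)%N -> xe j <= xe i.
Proof.
move=> /andP[i_gt0 le_ij]; elim: j le_ij => [|j IH] le_ij j_le; first lia.
have [le_ij' | gt_ij] := leqP i j; last by have -> : i = j.+1 by lia.
exact: le_trans (relaxed_step (k := j) ltac:(lia)).1 (IH le_ij' ltac:(lia)).
Qed.

Lemma relaxed_kkt_certificate : kkt_certificate xe xe.
Proof. by split=> // [i _ | k k_range]; [split=> //; left | exact: relaxed_step]. Qed.

Lemma relaxed_last_ge : (exists x, feasP N d s T x) -> (0 < N)%N -> 0 <= d ->
  (N.+1)%:R * d <= T -> (forall i, (2 <= i <= N)%N -> ~ violates N d xe i) ->
  d <= xe N.+1.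
Proof.
move=> [x Fx] N_gt0 d_ge0 T_ge xe_ok.
have xe_last := feasPe_last xe_opt.1.
have [_ [xe_flat | xe_tight]] := relaxed_step (k := N) ltac:(lia).
  have [N1 | N_ge2] : N = 1%N \/ (2 <= N)%N by lia.
    by move: xe_last T_ge xe_flat; rewrite N1 psum1; lra.
  have := xe_ok N ltac:(lia); rewrite not_violatesE lower_bound_mid // xe_flat; lra.
have := feasP_budget Fx (k := N) ltac:(lia).
by rewrite subnn mul0r addr0; move: xe_last; rewrite xe_tight; lra.
Qed.

Lemma relaxed_tight_before_violation m : (1 <= m < N)%N ->
  ~ violates N d xe m -> violates N d xe m.+1 -> tight xe m.
Proof.
move=> m_range /not_violatesE; rewrite violatesE !lower_bound_mid; try lia.
have [_ [-> | //]] := relaxed_step (k := m) ltac:(lia).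
by move=> /le_lt_trans/[apply]; rewrite ltxx.
Qed.

Section Truncated.
Variable m : nat.
Hypothesis P_feasible : exists x, feasP N d s T x.
Hypothesis m_range : (1 <= m < N)%N.
Hypothesis xe_ok : forall i, (2 <= i <= m)%N -> ~ violates N d xe i.
Hypothesis xe_viol : violates N d xe m.+1.
Hypothesis xe_start : (1 < m)%N \/ xe 1%N = s 1%N + d.

Lemma truncated_tight : tight xe m.
Proof.
case: (ltnP 1 m) => [m_gt1 | m_le1].
  by apply: (relaxed_tight_before_violation m_range _ xe_viol); apply: xe_ok; lia.
have m1 : m = 1%N by lia.
by case: xe_start => [| xe1E]; [lia | rewrite /tight m1 psum1 xe1E mul1r].
Qed.

Lemma truncated_relaxed_lt i : (m < i <= N.+1)%N -> xe i < 2%:R * d.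
Proof.
move: xe_viol; rewrite violatesE lower_bound_mid; last lia.
by move=> xe_lt i_range; apply: le_lt_trans xe_lt; apply: relaxed_noninc; lia.
Qed.

Lemma truncated_psum_le k : (m <= k <= N)%N ->
  psum k xe <= psum m xe + (k - m)%:R * (2%:R * d).
Proof.
move=> k_range; rewrite (psum_cat _ (m := m)) ?lerD2l; last lia.
rewrite -subSS; apply: sum_nat_le_const => i i_range.
by apply/ltW/truncated_relaxed_lt; lia.
Qed.

Lemma truncated_fill_le : pinned_fill xe m <= xe N.+1.
Proof.
have := truncated_psum_le (k := N) ltac:(lia).
by rewrite (feasPe_last xe_opt.1) /pinned_fill; lra.
Qed.

Lemma truncated_feasP : feasP N d s T (pinned xe m (pinned_fill xe m)).
Proof.
have xe_pre k : (1 <= k <= N)%N -> s k + k%:R * d <= psum k xe := xe_opt.1.1 k.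
apply: pinned_feasP; first lia.
- by move=> k k_range; apply: xe_pre; lia.
- move=> k k_range; apply: le_trans (xe_pre k _) (truncated_psum_le _); lia.
- by move=> i i_range; apply/not_violatesE/xe_ok.
- have [x Fx] := P_feasible; have := feasP_budget Fx (k := m) ltac:(lia).
  by move: truncated_tight; rewrite /tight /pinned_fill; lra.
- by rewrite /pinned_fill; ring.
Qed.

Lemma truncated_optimal xs : is_optimal N (feasP N d s T) xs ->
  forall i, (1 <= i <= N.+1)%N -> xs i = pinned xe m (pinned_fill xe m) i.
Proof.
move=> xs_opt; apply: (kkt_optimal truncated_feasP _ xs_opt).
have c_le := truncated_fill_le.
apply: (step_kkt_certificate (q := xe) (k := m) (c := pinned_fill xe m)); first lia.
- by rewrite pinned_low //; lia.
- by move=> i i_range; rewrite pinned_low; [split=> //; left | lia].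
- move=> j j_range; rewrite tight_pinned; last lia.
  by apply: relaxed_step; lia.
- by apply: le_trans c_le _; apply: relaxed_noninc; lia.
- by right; rewrite tight_pinned //; exact: truncated_tight.
move=> i i_range; have [le_iN | lt_Ni] := leqP i N.
  rewrite pinned_mid ?lower_bound_mid //; last lia.
  by split; [apply/ltW/(le_lt_trans c_le)/truncated_relaxed_lt; lia | right].
have -> : i = N.+1 by lia.
by rewrite pinned_last; [split=> //; left | lia].
Qed.

End Truncated.

Section Boundary.
Hypothesis P_feasible : exists x, feasP N d s T x.
Hypothesis T_ge : (N.+1)%:R * d <= T.
Hypothesis N_ge2 : (2 <= N)%N.
Hypothesis xe2_viol : violates N d xe 2.
Hypothesis xe1_slack : xe 1%N <> s 1%N + d.

Lemma boundary_relaxed_lt k : (1 <= k <= N.+1)%N -> psum k xe < k%:R * (2%:R * d).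
Proof.
move=> k_range.
have [_ [xe21 | xe_tight1]] := relaxed_step (k := 1) ltac:(lia); last first.
  by move: xe_tight1; rewrite /tight psum1 mul1r.
have xe1_lt : xe 1%N < 2%:R * d.
  by move/violatesE: xe2_viol; rewrite lower_bound_mid // xe21.
have : psum k xe <= psum k (fun=> xe 1%N).
  by apply: ler_psum => i i_range; apply: relaxed_noninc; lia.
rewrite psum_const => /le_lt_trans; apply.
by rewrite ltr_pM2l // ltr0n; lia.
Qed.

Lemma boundary_max_lt : boundary_max < 2%:R * d.
Proof.
have [k k_range ->] := boundary_max_attained ltac:(lia).
have := boundary_relaxed_lt (k := k) ltac:(lia).
have := xe_opt.1.1 k k_range; rewrite -/(psum k xe); lra.
Qed.

Lemma boundary_budget_bounds : 2%:R * d <= boundary_budget < 4%:R * d.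
Proof.
have := boundary_relaxed_lt (k := N.+1) ltac:(lia).
have := xe_opt.1.2; rewrite -/(psum N.+1 xe) => ->.
by move: T_ge; rewrite /boundary_budget -!natr1; lra.
Qed.

Lemma boundary_optimal xs : is_optimal N (feasP N d s T) xs ->
  forall i, (1 <= i <= N.+1)%N ->
  xs i = pinned (fun=> boundary_first) 1 (boundary_budget - boundary_first) i.
Proof.
have [B_ge B_lt] := andP boundary_budget_bounds.
have M_lt := boundary_max_lt.
have M_le := boundary_max_le_budget P_feasible ltac:(lia).
have [k0 k0_range M_eq] := boundary_max_attained ltac:(lia).
apply: (two_level_optimal (k0 := k0)) => //.
- by move=> k k_range; rewrite le_max boundary_max_ge ?orbT.
- by rewrite le_max lexx.
- by rewrite ge_max; apply/andP; split; lra.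
- by rewrite ge_max; apply/andP; split; lra.
- by rewrite /boundary_first maxEle -M_eq; case: ifP => _; [right | left].
Qed.

End Boundary.

End RelaxedOptimum.

End Problem.

Theorem theorem2 (R : realFieldType) (N : nat) (d T : R) (s : nat -> R)
    (xs xe : nat -> R) :
  (1 <= N)%N -> 0 < d ->
  0 <= s 1%N ->
  (forall i j : nat, (1 <= i)%N -> (i <= j)%N -> (j <= N)%N -> s i <= s j) ->
  (N.+1)%:R * d <= T ->
  (exists x, feasP N d s T x) ->
  is_optimal N (feasP N d s T) xs ->
  is_optimal N (feasPe N d s T) xe ->
  ((forall i : nat, (2 <= i <= N.+1)%N -> ~ violates N d xe i) ->
     forall i : nat, (1 <= i <= N.+1)%N -> xs i = xe i) /\
  (forall n0 : nat, (2 <= n0 <= N.+1)%N -> violates N d xe n0 ->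
     (forall i : nat, (2 <= i < n0)%N -> ~ violates N d xe i) ->
     (n0 <= N)%N /\
     (((2 < n0)%N \/ xe 1%N = s 1%N + d) ->
        (forall i : nat, (1 <= i <= n0.-1)%N -> xs i = xe i) /\
        (forall i : nat, (n0 <= i <= N)%N -> xs i = 2%:R * d) /\
        xs N.+1 = T + N%:R * d - \sum_(1 <= i < N.+1) xs i) /\
     ((n0 = 2%N /\ xe 1%N <> s 1%N + d) ->
        xs 1%N = Num.max ((T - (N%:R - 2%:R) * d) / 2%:R)
                   (\big[Num.max/s 1%N + d]_(1 <= k < N.+1) (s k - (k%:R - 2%:R) * d)) /\
        (forall i : nat, (2 <= i <= N)%N -> xs i = 2%:R * d) /\
        xs N.+1 = T - (N%:R - 2%:R) * d - xs 1%N)).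
Proof.
move=> N_gt0 d_gt0 _ _ T_ge P_feasible xs_opt xe_opt.
have d_ge0 := ltW d_gt0.
split=> [xe_ok | n0 n0_range xe_viol xe_ok].
  have xe_feas : feasP N d s T xe.
    by apply: feasPI xe_opt.1 _ => // i i_range; apply/not_violatesE/xe_ok.
  exact: kkt_optimal xe_feas (relaxed_kkt_certificate xe_opt) xs_opt.
have n0_le : (n0 <= N)%N.
  rewrite leqNgt; apply/negP => n0_gt; have n0E : n0 = N.+1 by lia.
  have xe_ge := relaxed_last_ge xe_opt P_feasible N_gt0 d_ge0 T_ge
    (fun i i_range => xe_ok i ltac:(lia)).
  by move: xe_viol; rewrite n0E violatesE lower_bound_last ltNge xe_ge.
split=> //; split=> [xe_start | [n0E xe1_slack]].
  have [m m_range n0E] : exists2 m, (1 <= m < N)%N & n0 = m.+1 by exists n0.-1; lia.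
  subst n0; have xe_ok' i : (2 <= i <= m)%N -> ~ violates N d xe i.
    by move=> i_range; apply: xe_ok; lia.
  have := truncated_optimal xe_opt P_feasible m_range xe_ok' xe_viol xe_start xs_opt.
  case/pinned_values=> [| xs_low xs_mid _]; first lia.
  by split=> //; split=> //; exact: feasPe_last xs_opt.1.1.
subst n0.
have := boundary_optimal xe_opt P_feasible T_ge n0_le xe_viol xe1_slack xs_opt.
case/pinned_values=> [| xs_first xs_mid ->]; first lia.
by split; [exact: xs_first | split=> //; rewrite xs_first].
Qed.
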